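(* For every $n\ge1$, $$\sum_{\sigma\in\mathfrak S_n}(xy)^{{\rm L}(\sigma)}\Bigl(\frac{x+y}{2}\Bigr)^{n-2{\rm L}(\sigma)}\beta^{{\rm RLmin}(\sigma)}=\sum_{k=1}^n\binom nk\frac{(\beta(y-x))^{n-k}}{2^{n-k}}\Bigl(\sum_{\sigma\in\mathfrak S_k}x^{{\rm des}(\sigma)+1}y^{{\rm asc}(\sigma)}\beta^{{\rm LRmin}(\sigma)}\Bigr)+\Bigl(\frac{\beta(y-x)}{2}\Bigr)^n.$$
   Context: For $\sigma=\sigma_1\cdots\sigma_m\in\mathfrak S_m$: ${\rm asc}(\sigma)$, ${\rm des}(\sigma)$ are the numbers of $i\in[m-1]$ with $\sigma_i<\sigma_{i+1}$, resp. $\sigma_i>\sigma_{i+1}$; ${\rm L}(\sigma)$ is the number of $i$ with $1\le i<m$ and $\sigma_{i-1}<\sigma_i>\sigma_{i+1}$ (convention $\sigma_0=0$); ${\rm LRmin}(\sigma)$ is the number of $i$ with $\sigma_j>\sigma_i$ for all $j<i$; ${\rm RLmin}(\sigma)$ is the number of $i$ with $\sigma_j>\sigma_i$ for all $j>i$. *)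

From mathcomp Require Import all_boot all_order all_algebra all_fingroup.
Set Implicit Arguments. Unset Strict Implicit. Unset Printing Implicit Defensive.

(* One-line notation of a permutation s of 'I_m, with values shifted to 1..m:
   word s = [:: sigma_1; ...; sigma_m]. *)
Definition word (m : nat) (s : 'S_m) : seq nat := [seq (s i).+1 | i <- enum 'I_m].

(* Statistics on a word w = w_1 ... w_m, stored 0-indexed: nth 0 w j = w_(j+1). *)
Definition asc_w (w : seq nat) : nat :=
  count (fun j => nth 0 w j < nth 0 w j.+1) (iota 0 (size w).-1).
Definition des_w (w : seq nat) : nat :=
  count (fun j => nth 0 w j > nth 0 w j.+1) (iota 0 (size w).-1).
(* L: #{1 <= i < m | w_(i-1) < w_i > w_(i+1)}, with w_0 = 0;
   note nth 0 (0 :: w) j = w_(j) (1-indexed) = w_0 = 0 when j = 0. *)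
Definition L_w (w : seq nat) : nat :=
  count (fun j => (nth 0 (0 :: w) j < nth 0 w j) && (nth 0 w j > nth 0 w j.+1))
        (iota 0 (size w).-1).
Definition LRmin_w (w : seq nat) : nat :=
  count (fun j => all (fun k => nth 0 w k > nth 0 w j) (iota 0 j)) (iota 0 (size w)).
Definition RLmin_w (w : seq nat) : nat :=
  count (fun j => all (fun k => nth 0 w k > nth 0 w j) (iota j.+1 ((size w) - j.+1)))
        (iota 0 (size w)).

Definition asc (m : nat) (s : 'S_m) := asc_w (word s).
Definition des (m : nat) (s : 'S_m) := des_w (word s).
Definition Lpk (m : nat) (s : 'S_m) := L_w (word s).
Definition LRmin (m : nat) (s : 'S_m) := LRmin_w (word s).
Definition RLmin (m : nat) (s : 'S_m) := RLmin_w (word s).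

From mathcomp Require Import all_boot all_order all_algebra all_fingroup.
From mathcomp Require Import zify ring.

Set Implicit Arguments.
Unset Strict Implicit.
Unset Printing Implicit Defensive.

(* Put e = (y - x)/2 and t = (x + y)/2, so that x = t - e, y = t + e and xy = t^2 - e^2;
   both sides then become values at t of polynomials in t.  Building every permutation
   of [1..n] by inserting n into the n slots of a permutation of [1..n-1] shows that
   the (L, RLmin) generating polynomial over S_n is Q^n 1, with
   Q p = b t p + (t^2 - e^2) p', and that t - e times the (des, asc, LRmin) generating
   polynomial over S_k (k >= 1) is P^k 1, with P p = b (t - e) p + (t^2 - e^2) p'.
   Since Q = P + b e, the binomial theorem expands Q^n into the right-hand side. *)

Section Insert.
Variable T : Type.

Definition insert (j : nat) (a : T) (s : seq T) := take j s ++ a :: drop j s.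

Lemma size_insert j a s : size (insert j a s) = (size s).+1.
Proof. by rewrite size_cat /= addnS -size_cat cat_take_drop. Qed.

Lemma insert0 a s : insert 0 a s = a :: s.
Proof. by rewrite /insert take0 drop0. Qed.

Lemma insert_size a s : insert (size s) a s = rcons s a.
Proof. by rewrite /insert take_size drop_size cats1. Qed.

End Insert.

Lemma perm_insert (T : eqType) j (a : T) s : perm_eq (insert j a s) (a :: s).
Proof. by rewrite /insert -cat1s perm_catCA cat_take_drop. Qed.

Section Windows.
Variables (T : Type) (x0 : T) (P : T -> T -> T -> bool).

Fixpoint count3 (a : T) (s : seq T) : nat :=
  if s is c :: s' then (if s' is d :: _ then P a c d else false) + count3 c s' else 0.

Lemma count3E a s :
  count (fun i => P (nth x0 (a :: s) i) (nth x0 s i) (nth x0 s i.+1)) (iota 0 (size s).-1)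
  = count3 a s.
Proof.
elim: s a => [|c s IH] a //; case: s IH => [|d s] IH //.
have -> : count3 a [:: c, d & s] = P a c d + count3 c (d :: s) by [].
by rewrite -IH /= -[1]/(1 + 0) iotaDl count_map.
Qed.

Lemma count3_cat a s c t :
  count3 a (s ++ c :: t) =
  count3 a (rcons s c) + (if t is d :: _ then P (last a s) c d else false) + count3 c t.
Proof.
elim: s a => [|u s IH] a /=; first by case: t.
by rewrite IH; case: s IH => [|z s] IH /=; lia.
Qed.

Lemma last_take a s k : k <= size s -> last a (take k s) = nth x0 (a :: s) k.
Proof.
move=> hk; rewrite (last_nth x0) size_take_min (minn_idPl hk).
by case: k hk => [|k] hk //=; rewrite nth_take.
Qed.

Lemma count3_rcons a s c : 0 < size s ->
  count3 a (rcons s c) = count3 a s + P (nth x0 (a :: s) (size s).-1) (nth x0 s (size s).-1) c.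
Proof.
case/lastP: s => [|s u] // _.
rewrite -cats1 cat_rcons count3_cat /= !addn0 size_rcons /= nth_rcons ltnn eqxx.
by rewrite -last_take ?size_rcons // -cats1 take_size_cat.
Qed.

Lemma count3_insert a c s j : 0 < j < size s ->
  count3 a (insert j c s) + P (nth x0 (a :: s) j.-1) (nth x0 s j.-1) (nth x0 s j)
    + ((j < (size s).-1) && P (nth x0 s j.-1) (nth x0 s j) (nth x0 s j.+1))
  = count3 a s + P (nth x0 (a :: s) j.-1) (nth x0 s j.-1) c + P (nth x0 s j.-1) c (nth x0 s j)
    + ((j < (size s).-1) && P c (nth x0 s j) (nth x0 s j.+1)).
Proof.
case: j => [|j] // /andP[_ hj] /=.
have hj' : j < size s by lia.
have es : s = take j s ++ nth x0 s j :: nth x0 s j.+1 :: drop j.+2 s.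
  by rewrite -(drop_nth x0 hj) -(drop_nth x0 hj') cat_take_drop.
have -> : insert j.+1 c s = take j s ++ nth x0 s j :: c :: nth x0 s j.+1 :: drop j.+2 s.
  by rewrite /insert (take_nth x0 hj') -(drop_nth x0 hj) cat_rcons.
rewrite [in count3 a s]es !count3_cat /= last_take; last by lia.
case: (ltnP j.+2 (size s)) => h.
  rewrite (drop_nth x0 h); have -> : j.+1 < (size s).-1 by lia.
  by rewrite /=; lia.
rewrite drop_oversize //; have -> : j.+1 < (size s).-1 = false by lia.
by rewrite /=; lia.
Qed.

End Windows.

Definition peak3 (a b c : nat) := (a < b) && (c < b).
Definition desc3 (a b c : nat) := c < b.
Definition asc3 (a b c : nat) := b < c.

Lemma L_wE w : L_w w = count3 peak3 0 w. Proof. exact: count3E. Qed.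
Lemma des_wE w : des_w w = count3 desc3 0 w. Proof. exact: count3E. Qed.
Lemma asc_wE w : asc_w w = count3 asc3 0 w. Proof. exact: count3E. Qed.

Fixpoint rlmin (s : seq nat) : nat :=
  if s is a :: s' then all (fun k => a < k) s' + rlmin s' else 0.

Fixpoint lrmin (p s : seq nat) : nat :=
  if s is a :: s' then all (fun k => a < k) p + lrmin (a :: p) s' else 0.

Lemma RLmin_wE w : RLmin_w w = rlmin w.
Proof.
rewrite /RLmin_w (eq_count (a2 := fun j => all (fun k => nth 0 w j < k) (drop j.+1 w))).
  elim: w => [|b w IH] //.
  by rewrite /= -IH -[1]/(1 + 0) iotaDl count_map drop0.
move=> j /=; rewrite -[in RHS](take_size (drop j.+1 w)) size_drop -(map_nth_iota 0) //.
by rewrite all_map.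
Qed.

Lemma LRmin_wE w : LRmin_w w = lrmin [::] w.
Proof.
rewrite /LRmin_w (eq_in_count (a2 := fun j => all (fun k => nth 0 w j < k) ([::] ++ take j w))).
  elim: w [::] => [|b w IH] p //.
  rewrite /= -IH -[1]/(1 + 0) iotaDl count_map cats0.
  by congr (_ + _); apply: eq_count => j /=; rewrite !all_cat /= andbCA.
move=> j; rewrite mem_iota add0n => /andP[_ hj].
by rewrite cat0s -(map_nth_iota0 0) ?all_map // ltnW.
Qed.

(* Slot j of w is the gap just before its j-th letter (counting from 0); slot [size w]
   is the end of w. *)
Definition is_peak (w : seq nat) i :=
  (i < (size w).-1) && peak3 (nth 0 (0 :: w) i) (nth 0 w i) (nth 0 w i.+1).

Definition near_peak (w : seq nat) j := (0 < j) && is_peak w j.-1 || is_peak w j.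

Definition adds_ascent (w : seq nat) j := (size w <= j) || (nth 0 w j < nth 0 w j.-1).

Lemma count_near_peak w : count (near_peak w) (iota 0 (size w)) = (L_w w).*2.
Proof.
have peaksE : L_w w = count (is_peak w) (iota 0 (size w)).
  rewrite /L_w; case E: (size w) => [|m] //.
  rewrite -[in RHS]addn1 iotaD count_cat /= {2}/is_peak E ltnn /= !addn0.
  by apply: eq_in_count => i; rewrite mem_iota /is_peak E => /andP[_ ->].
have shiftedE : count (fun j => (0 < j) && is_peak w j.-1) (iota 0 (size w)) = L_w w.
  rewrite peaksE; case E: (size w) => [|m] //.
  rewrite -[in RHS]addn1 iotaD count_cat /= -[1]/(1 + 0) iotaDl count_map.
  by rewrite {3}/is_peak E ltnn !addn0 add0n.
have disjoint j : (0 < j) && is_peak w j.-1 && is_peak w j = false.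
  case: j => [|j] //; rewrite /is_peak /peak3 /=.
  by case: (ltngtP (nth 0 w j) (nth 0 w j.+1)); rewrite ?andbF.
have := count_predUI (fun j => (0 < j) && is_peak w j.-1) (is_peak w) (iota 0 (size w)).
rewrite (eq_count disjoint) count_pred0 addn0 shiftedE -peaksE => countU.
by rewrite -addnn -countU.
Qed.

Lemma count_adds_ascent w : 0 < size w ->
  count (adds_ascent w) (iota 1 (size w)) = (des_w w).+1.
Proof.
rewrite /des_w; case E: (size w) => [|m] // _.
rewrite [m.+1.-1]/= -(addn1 m) iotaD count_cat /= {2}/adds_ascent E leqnn /= addn1.
rewrite -[1]/(1 + 0) iotaDl count_map; congr _.+1; apply: eq_in_count => j.
by rewrite mem_iota /= /adds_ascent E add1n add0n => hj; rewrite ltnNge hj.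
Qed.

Lemma count_adds_descent w : uniq w ->
  count (predC (adds_ascent w)) (iota 1 (size w)) = asc_w w.
Proof.
move=> uw; rewrite /asc_w; case E: (size w) => [|m] //.
rewrite [m.+1.-1]/= -(addn1 m) iotaD count_cat /= {2}/adds_ascent E leqnn addn0.
rewrite -[1]/(1 + 0) iotaDl count_map /= addn0; apply: eq_in_count => j.
rewrite mem_iota /= /adds_ascent E add1n add0n => hj; rewrite ltnNge hj /=.
have ne : nth 0 w j != nth 0 w j.+1 by rewrite nth_uniq ?E // ?(ltn_eqF (ltnSn j)); lia.
by case: ltngtP ne => //= ->; rewrite eqxx.
Qed.

Lemma all_gt_max N s : all (fun k => k < N) s -> all (fun k => N < k) s = (s == [::]).
Proof. by case: s => [|a s] //= /andP[ha _]; rewrite ltnNge ltnW. Qed.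

Lemma rlmin_cat_max N s v : all (fun k => k < N) (s ++ v) ->
  rlmin (s ++ N :: v) = rlmin (s ++ v) + (v == [::]).
Proof.
elim: s => [|a s IH] /=; first by move=> hv; rewrite all_gt_max // addnC.
by case/andP=> ha hsv; rewrite IH // !all_cat /= ha; lia.
Qed.

Lemma eq_lrmin p1 p2 v :
  {in v, forall x, all (fun k => x < k) p1 = all (fun k => x < k) p2} ->
  lrmin p1 v = lrmin p2 v.
Proof.
elim: v p1 p2 => [|a v IH] p1 p2 h //=.
rewrite h ?mem_head //; congr (_ + _); apply: IH => x hx /=.
by rewrite h // inE hx orbT.
Qed.

Lemma lrmin_cat_max N p s v : all (fun k => k < N) p -> all (fun k => k < N) (s ++ v) ->
  lrmin p (s ++ N :: v) = lrmin p (s ++ v) + (p == [::]) && (s == [::]).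
Proof.
elim: s p => [|a s IH] p hp /=.
  move=> hv; rewrite all_gt_max // andbT addnC; congr (_ + _).
  by apply: eq_lrmin => x /(allP hv) /= ->.
case/andP=> ha hsv; rewrite IH //= ?ha ?hp // andbF; lia.
Qed.

Section MaxInsert.
Variables (N : nat) (w : seq nat).
Hypothesis w_lt_N : all (fun k => k < N) w.

Lemma nth_lt_max i : i < size w -> nth 0 w i < N.
Proof. by move=> hi; apply: (allP w_lt_N); rewrite mem_nth. Qed.

Lemma RLmin_w_insert j : RLmin_w (insert j N w) = RLmin_w w + (size w <= j).
Proof.
by rewrite !RLmin_wE /insert rlmin_cat_max cat_take_drop // -size_eq0 size_drop subn_eq0.
Qed.

Lemma LRmin_w_cons : LRmin_w (N :: w) = (LRmin_w w).+1.
Proof. by rewrite !LRmin_wE (@lrmin_cat_max N [::] [::] w) ?addn1. Qed.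

Lemma LRmin_w_insert j : 0 < j <= size w -> LRmin_w (insert j N w) = LRmin_w w.
Proof.
case/andP=> j_gt0 j_le; rewrite !LRmin_wE /insert lrmin_cat_max ?cat_take_drop //=.
by rewrite -size_eq0 size_take_min (minn_idPl j_le) eqn0Ngt j_gt0 addn0.
Qed.

Lemma L_w_rcons : L_w (rcons w N) = L_w w.
Proof.
case: (posnP (size w)) => [/size0nil -> // | hw].
have last_lt : nth 0 w (size w).-1 < N by apply: nth_lt_max; lia.
by rewrite !L_wE (count3_rcons 0) // /peak3 [N < _]ltnNge (ltnW last_lt) andbF addn0.
Qed.

Lemma L_w_insert j : j < size w -> L_w (insert j N w) = L_w w + ~~ near_peak w j.
Proof.
rewrite /near_peak /is_peak !L_wE /peak3; case: j => [|j] hj.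
  case: w w_lt_N hj => [|c v] //= /andP[hc _] _; rewrite /insert /= hc.
  by rewrite [N < c]ltnNge (ltnW hc); case: v => [|d v] /=; lia.
have u_lt := nth_lt_max (ltnW hj); have v_lt := nth_lt_max hj.
have := count3_insert 0 peak3 0 N (hj : 0 < j.+1 < size w).
rewrite /peak3 /= u_lt v_lt [N < nth 0 w j]ltnNge (ltnW u_lt).
rewrite [N < nth 0 w j.+1]ltnNge (ltnW v_lt) /=.
have -> : j < (size w).-1 by lia.
by case: ltngtP => /=; lia.
Qed.

Lemma des_w_cons : 0 < size w -> des_w (N :: w) = (des_w w).+1.
Proof.
case: w w_lt_N => [|c v] //= /andP[hc _] _; rewrite !des_wE /desc3 /= hc.
by case: v => [|d v] /=; lia.
Qed.

Lemma asc_w_cons : asc_w (N :: w) = asc_w w.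
Proof.
case: w w_lt_N => [|c v] //= /andP[hc _]; rewrite !asc_wE /asc3 /= ltnNge (ltnW hc).
by case: v.
Qed.

Lemma des_w_insert j : 0 < j <= size w ->
  des_w (insert j N w) = des_w w + ~~ adds_ascent w j.
Proof.
rewrite /adds_ascent !des_wE; case/andP=> j_gt0.
case: (ltngtP j (size w)) => [j_lt | // | j_eq] _; last first.
  subst j; rewrite insert_size (count3_rcons 0) // /desc3 ltnNge.
  by rewrite (ltnW (nth_lt_max _)) ?addn0 //; lia.
have j_mid : 0 < j < size w by rewrite j_gt0.
have u_lt : nth 0 w j.-1 < N by apply: nth_lt_max; lia.
have v_lt := nth_lt_max j_lt.
have := count3_insert 0 desc3 0 N j_mid.
by rewrite /desc3 v_lt [N < _]ltnNge (ltnW u_lt) /=; lia.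
Qed.

Lemma asc_w_insert j : uniq w -> 0 < j <= size w ->
  asc_w (insert j N w) = asc_w w + adds_ascent w j.
Proof.
rewrite /adds_ascent !asc_wE => uw; case/andP=> j_gt0.
case: (ltngtP j (size w)) => [j_lt | // | j_eq] _; last first.
  by subst j; rewrite insert_size (count3_rcons 0) // /asc3 nth_lt_max ?addn1 //; lia.
have j_mid : 0 < j < size w by rewrite j_gt0.
have u_lt : nth 0 w j.-1 < N by apply: nth_lt_max; lia.
have v_lt := nth_lt_max j_lt.
have := count3_insert 0 asc3 0 N j_mid.
rewrite /asc3 u_lt [N < _]ltnNge (ltnW v_lt).
have : nth 0 w j.-1 != nth 0 w j.
  have pred_lt : j.-1 < j by lia.
  by rewrite nth_uniq ?(ltn_eqF pred_lt) ?(ltn_trans pred_lt).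
by case: ltngtP => //= _ _; lia.
Qed.

End MaxInsert.

Fixpoint permseqs (n : nat) : seq (seq nat) :=
  if n is m.+1 then [seq insert j n w | w <- permseqs m, j <- iota 0 n] else [:: [::]].

Lemma permseqsS n :
  permseqs n.+1 = [seq insert j n.+1 w | w <- permseqs n, j <- iota 0 n.+1].
Proof. by []. Qed.

Lemma size_permseqs n : size (permseqs n) = n`!.
Proof. by elim: n => // n IH; rewrite permseqsS size_allpairs IH size_iota factS mulnC. Qed.

Lemma perm_iotaS n : perm_eq (n.+1 :: iota 1 n) (iota 1 n.+1).
Proof. by rewrite -(addn1 n) iotaD cats1 add1n addn1 perm_sym perm_rcons. Qed.

Lemma mem_permseqs n w : (w \in permseqs n) = perm_eq w (iota 1 n).
Proof.
elim: n w => [|n IH] w; first by rewrite inE; apply/eqP/perm_nilP.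
rewrite permseqsS; apply/allpairsPdep/idP => [[w' [j [w'_in _ ->]]] | w_perm].
  apply: perm_trans (perm_insert j n.+1 w') (perm_trans _ (perm_iotaS n)).
  by rewrite perm_cons -IH.
have max_in : n.+1 \in w by rewrite (perm_mem w_perm) mem_iota; lia.
set j := index n.+1 w; set w' := take j w ++ drop j.+1 w.
have j_lt : j < size w by rewrite index_mem.
have w_eq : w = insert j n.+1 w'.
  rewrite /insert /w' take_cat size_take j_lt ltnn subnn take0 cats0 drop_cat.
  by rewrite size_take j_lt ltnn subnn drop0 -{1}(nth_index 0 max_in) -drop_nth // cat_take_drop.
exists w', j; split => //; last by rewrite mem_iota add0n -(size_iota 1 n.+1) -(perm_size w_perm).
rewrite IH -(perm_cons n.+1) perm_sym.
apply: perm_trans (perm_trans (perm_iotaS n) _) (perm_insert j n.+1 w').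
by rewrite -w_eq perm_sym.
Qed.

Lemma permseqsP n w : w \in permseqs n ->
  [/\ size w = n, uniq w & all (fun k => k < n.+1) w].
Proof.
rewrite mem_permseqs => w_perm; split.
- by rewrite (perm_size w_perm) size_iota.
- by rewrite (perm_uniq w_perm) iota_uniq.
- by rewrite (perm_all _ w_perm); apply/allP => k; rewrite mem_iota; lia.
Qed.

Lemma size_word n (s : 'S_n) : size (word s) = n.
Proof. by rewrite size_map size_enum_ord. Qed.

Lemma nth_word n (s : 'S_n) (i : 'I_n) : nth 0 (word s) i = (s i).+1.
Proof. by rewrite (nth_map i) ?size_enum_ord // nth_ord_enum. Qed.

Lemma word_inj n : injective (@word n).
Proof.
move=> s t st; apply/permP => i; apply: val_inj.
by have := nth_word s i; rewrite st nth_word => -[].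
Qed.

Lemma word_in_permseqs n (s : 'S_n) : word s \in permseqs n.
Proof.
have word_uniq : uniq (word s).
  by rewrite map_inj_uniq ?enum_uniq // => i j [] /val_inj /perm_inj.
have word_sub : {subset word s <= iota 1 n}.
  by move=> k /mapP [i _ ->]; rewrite mem_iota; have := ltn_ord (s i); lia.
have [|_ word_eq] := uniq_min_size word_uniq word_sub; first by rewrite size_iota size_word.
by rewrite mem_permseqs; apply: uniq_perm; rewrite ?iota_uniq.
Qed.

Import GRing.Theory Num.Theory.
Local Open Scope ring_scope.

Lemma big_permseqsS (V : nmodType) n (F : seq nat -> V) :
  \sum_(w <- permseqs n.+1) F w
  = \sum_(w <- permseqs n) \sum_(j <- iota 0 n.+1) F (insert j n.+1 w).
Proof. by rewrite permseqsS big_allpairs_dep. Qed.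

Lemma big_word_permseqs (V : nmodType) n (F : seq nat -> V) :
  \sum_(s : 'S_n) F (word s) = \sum_(w <- permseqs n) F w.
Proof.
have words_uniq : uniq [seq word s | s <- enum 'S_n].
  by rewrite map_inj_uniq ?enum_uniq //; exact: word_inj.
have words_sub : {subset [seq word s | s <- enum 'S_n] <= permseqs n}.
  by move=> w /mapP [s _ ->]; apply: word_in_permseqs.
have [|size_eq words_eq] := uniq_min_size words_uniq words_sub.
  by rewrite size_map -cardE card_Sn size_permseqs.
have words_perm : perm_eq [seq word s | s <- enum 'S_n] (permseqs n).
  by apply: uniq_perm; rewrite // (uniq_size_uniq words_uniq words_eq) size_eq.
by rewrite -(perm_big _ words_perm) big_map enumT.
Qed.

Lemma sumr_bool (V : nmodType) (I : Type) (r : seq I) (c : pred I) (F : bool -> V) :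
  \sum_(i <- r) F (c i) = F true *+ count c r + F false *+ count (predC c) r.
Proof.
rewrite (eq_bigr (fun i => if c i then F true else F false)); last by move=> i _; case: (c i).
by rewrite big_if !big_const_seq !iter_addr_0.
Qed.

Lemma iter_addZ (R : comPzRingType) (V : lmodType R) (f : V -> V)
    (fD : {morph f : u v / u + v}) (fZ : scalable f) (c : R) n v :
  iter n (fun u => f u + c *: u) v
  = \sum_(k < n.+1) ('C(n, k)%:R * c ^+ (n - k)) *: iter k f v.
Proof.
have f0 : f 0 = 0 by rewrite -(scale0r (0 : V)) fZ !scale0r.
elim: n => [|n IH]; first by rewrite big_ord1 /= bin0 expr0 mulr1 scale1r.
rewrite iterS IH (big_morph f fD f0) scaler_sumr.
under eq_bigr do rewrite fZ.
rewrite [RHS]big_ord_recl [X in _ = _ + X](eq_bigr (fun k : 'I_n.+1 =>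
   ('C(n, k)%:R * c ^+ (n - k)) *: iter k.+1 f v
   + ('C(n, k.+1)%:R * c ^+ (n - k)) *: iter k.+1 f v)); last first.
  by move=> k _; rewrite lift0 subSS binS natrD mulrDl scalerDl addrC.
rewrite big_split /= addrCA; congr (_ + _).
rewrite big_ord_recl [X in _ = _ + X]big_ord_recr /=.
rewrite (bin_small (ltnSn n)) mul0r scale0r addr0 !bin0 !subn0 scalerA exprS.
congr (_ + _); first by congr (_ *: _); ring.
apply: eq_bigr => k _; rewrite scalerA /bump /= add0n; congr (_ *: _).
by rewrite -(subnSK (ltn_ord k)) exprS; ring.
Qed.

Section Polynomials.
Variables (R : comNzRingType) (e b : R).

Definition xt : {poly R} := 'X - e%:P.
Definition yt : {poly R} := 'X + e%:P.

Definition peak_mono (L m r : nat) : {poly R} := (xt * yt) ^+ L * 'X^(m - L.*2) * b%:P ^+ r.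
Definition desc_mono (d a r : nat) : {poly R} := xt ^+ d.+1 * yt ^+ a * b%:P ^+ r.

Definition peak_op (p : {poly R}) := b%:P * 'X * p + xt * yt * p^`().
Definition desc_op (p : {poly R}) := b%:P * xt * p + xt * yt * p^`().

Lemma peak_opE p : peak_op p = desc_op p + (b * e) *: p.
Proof. by rewrite /peak_op /desc_op /xt -mul_polyC polyCM; ring. Qed.

Lemma desc_opD : {morph desc_op : p q / p + q}.
Proof. by move=> p q; rewrite /desc_op derivD; ring. Qed.

Lemma desc_opZ : scalable desc_op.
Proof. by move=> a p; rewrite /desc_op derivZ -!scalerAr scalerDr. Qed.

Lemma desc_op0 : desc_op 0 = 0.
Proof. by rewrite /desc_op deriv0 !mulr0 addr0. Qed.

Lemma peak_op0 : peak_op 0 = 0.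
Proof. by rewrite /peak_op deriv0 !mulr0 addr0. Qed.

Lemma peak_opD : {morph peak_op : p q / p + q}.
Proof. by move=> p q; rewrite /peak_op derivD; ring. Qed.

Lemma deriv_xtyt : (xt * yt)^`() = 'X *+ 2.
Proof. by rewrite derivM /xt /yt derivXsubC derivD derivX derivC; ring. Qed.

Lemma peak_op_mono L m r : (L.*2 <= m)%N ->
  peak_op (peak_mono L m r) = peak_mono L m.+1 r.+1
    + peak_mono L.+1 m.+1 r *+ (m - L.*2) + peak_mono L m.+1 r *+ L.*2.
Proof.
move=> le_Lm; rewrite /peak_op /peak_mono !derivM !deriv_exp deriv_xtyt derivX derivC.
have -> : (m.+1 - L.*2 = (m - L.*2).+1)%N by lia.
have -> : (m.+1 - L.+1.*2 = (m - L.*2).-1)%N by rewrite doubleS; lia.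
move: (m - L.*2)%N => k; clear le_Lm; rewrite -mul2n.
by case: L => [|L]; case: k => [|k] /=; rewrite ?expr0 ?exprS ?mul0rn ?mulr0n; ring.
Qed.

Lemma desc_op_mono d a r :
  desc_op (desc_mono d a r) = desc_mono d.+1 a r.+1
    + desc_mono d a.+1 r *+ d.+1 + desc_mono d.+1 a r *+ a.
Proof.
rewrite /desc_op /desc_mono !derivM !deriv_exp derivXsubC /yt derivD derivX !derivC.
rewrite mul0r mul0rn addr0.
by case: a => [|a] /=; rewrite ?expr0 ?exprS ?mul0rn ?mulr0n ?mulr1n; ring.
Qed.

Definition peak_poly (w : seq nat) := peak_mono (L_w w) (size w) (RLmin_w w).
Definition desc_poly (w : seq nat) := desc_mono (des_w w) (asc_w w) (LRmin_w w).

Lemma sum_insert_peak_poly N w : all (fun k => k < N)%N w ->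
  \sum_(j <- iota 0 (size w).+1) peak_poly (insert j N w) = peak_op (peak_poly w).
Proof.
move=> w_lt_N.
have le_Lm : ((L_w w).*2 <= size w)%N.
  by rewrite -count_near_peak -[X in (_ <= X)%N](size_iota 0) count_size.
have count_far : count (predC (near_peak w)) (iota 0 (size w)) = (size w - (L_w w).*2)%N.
  rewrite -[size w in RHS](size_iota 0) -(count_predC (near_peak w) (iota 0 (size w))).
  by rewrite count_near_peak addKn.
rewrite -(addn1 (size w)) iotaD big_cat big_seq1 add0n.
rewrite (eq_big_seq (fun j =>
  peak_mono (L_w w + ~~ near_peak w j) (size w).+1 (RLmin_w w))); last first.
  move=> j; rewrite mem_iota => /andP[_ j_lt].
  by rewrite /peak_poly size_insert L_w_insert // RLmin_w_insert // leqNgt j_lt addn0.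
rewrite (sumr_bool _ _ (fun c : bool => peak_mono (L_w w + ~~ c) (size w).+1 (RLmin_w w))).
rewrite count_near_peak count_far /peak_poly size_insert RLmin_w_insert // leqnn addn1.
rewrite insert_size L_w_rcons // peak_op_mono //= addn0 addn1.
by rewrite addrC [RHS]addrAC addrA.
Qed.

Lemma sum_insert_desc_poly N w : all (fun k => k < N)%N w -> uniq w -> (0 < size w)%N ->
  \sum_(j <- iota 0 (size w).+1) desc_poly (insert j N w) = desc_op (desc_poly w).
Proof.
move=> w_lt_N w_uniq w_ne.
rewrite [iota 0 _]/= big_cons (eq_big_seq (fun j =>
  desc_mono (des_w w + ~~ adds_ascent w j) (asc_w w + adds_ascent w j) (LRmin_w w))); last first.
  move=> j; rewrite mem_iota => /andP[j_gt0 j_le].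
  by rewrite /desc_poly des_w_insert ?asc_w_insert ?LRmin_w_insert // ?j_gt0; lia.
rewrite (sumr_bool _ _ (fun c : bool => desc_mono (des_w w + ~~ c) (asc_w w + c) (LRmin_w w))).
rewrite count_adds_ascent // count_adds_descent // /desc_poly insert0 des_w_cons // asc_w_cons //.
by rewrite LRmin_w_cons // desc_op_mono /= !addn0 !addn1 addrA.
Qed.

Lemma sum_peak_poly n : \sum_(w <- permseqs n) peak_poly w = iter n peak_op 1.
Proof.
elim: n => [|n IH]; first by rewrite big_seq1 /peak_poly /peak_mono /= !expr0 !mulr1.
rewrite big_permseqsS iterS -IH (big_morph _ peak_opD peak_op0).
by apply: eq_big_seq => w /permseqsP[<- _ w_lt]; apply: sum_insert_peak_poly.
Qed.

Lemma sum_desc_poly k : \sum_(w <- permseqs k.+1) desc_poly w = iter k.+1 desc_op 1.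
Proof.
elim: k => [|k IH].
  rewrite /= big_seq1 /desc_poly /desc_mono /desc_op derivC mulr0 addr0 mulr1 insert0 /=.
  by rewrite expr1 expr0 mulr1 mulrC.
rewrite big_permseqsS iterS -IH (big_morph _ desc_opD desc_op0).
apply: eq_big_seq => w /permseqsP[w_size w_uniq w_lt].
by rewrite -w_size sum_insert_desc_poly // w_size.
Qed.

End Polynomials.

Theorem theorem6p5 (R : numFieldType) (x y b : R) (n : nat) (hn : (1 <= n)%N) :
  \sum_(s : 'S_n) (x * y) ^+ Lpk s * ((x + y) / 2%:R) ^+ (n - 2 * Lpk s)%N * b ^+ RLmin s
  = \sum_(1 <= k < n.+1)
      'C(n, k)%:R * ((b * (y - x)) ^+ (n - k) / 2%:R ^+ (n - k))
        * (\sum_(s : 'S_k) x ^+ (des s).+1 * y ^+ asc s * b ^+ LRmin s)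
    + (b * (y - x) / 2%:R) ^+ n.
Proof.
(* The identity also holds for n = 0. *)
have two_neq0 : (2%:R : R) != 0 by rewrite pnatr_eq0.
set v := (x + y) / 2%:R; set e := (y - x) / 2%:R.
have x_eq : v - e = x by rewrite /v /e; field.
have y_eq : v + e = y by rewrite /v /e; field.
have be_pow m : (b * e) ^+ m = (b * (y - x)) ^+ m / 2%:R ^+ m by rewrite mulrA expr_div_n.
transitivity ((iter n (peak_op e b) 1).[v]).
  rewrite -sum_peak_poly -big_word_permseqs horner_sum; apply: eq_bigr => s _.
  by rewrite /peak_poly /peak_mono !hornerE x_eq y_eq size_word -mul2n.
rewrite (eq_iter (peak_opE e b) n 1) (iter_addZ (desc_opD e b) (desc_opZ e b)).
rewrite horner_sum big_ord_recl addrC; congr (_ + _); last first.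
  by rewrite hornerZ hornerC bin0 subn0 mul1r mulr1 mulrA.
rewrite big_add1 big_mkord; apply: eq_bigr => k _.
rewrite hornerZ lift0 be_pow -sum_desc_poly -big_word_permseqs horner_sum.
congr (_ * _); apply: eq_bigr => s _.
by rewrite /desc_poly /desc_mono !hornerE x_eq y_eq.
Qed.
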